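(* Let $d\ge2$. (1) If $y,y_0\in Y_d$ are such that $\tau_{y_0}\in\overline{A_{d+1}\tau_y}$ and $y_0$ is L, then $y$ is L. (2) If $x,x_0\in X_d$ are such that $x_0\in\overline{A_dx}$ and $x_0$ is GL, then $x$ is GL.
   Context: $X_k$ is the space of unimodular lattices in $\mathbb{R}^k$ ($\cong SL_k(\mathbb{R})/SL_k(\mathbb{Z})$, coset of $g$ = lattice spanned by the columns of $g$), with quotient topology. $Y_d$ is the space of grids $x+v$ ($x\in X_d$, $v\in\mathbb{R}^d$). The embedding $\tau:Y_d\to X_{d+1}$ sends the grid $y=\bar g+v$ ($\bar g$ the lattice spanned by columns of $g\in SL_d(\mathbb{R})$) to the lattice $\tau_y=\begin{pmatrix} g& v\\0&1\end{pmatrix}SL_{d+1}(\mathbb{Z})$, i.e. $\tau_y=\{(u+nv,n)^t: u\in\bar g,\ n\in\mathbb{Z}\}$. $A_k$ is the group of positive diagonal $k\times k$ matrices of determinant one. For $w\in\mathbb{R}^d$, $N(w)=\prod_iw_i$; for a grid $y$, $N(y)=\inf\{|N(w)|:w\in y\}$ and $n(x+v)=x+nv$. A grid $y$ is L if $\inf_{n\neq0}|nN(ny)|=0$; a lattice $x\in X_d$ is GL if every grid $x+v$ ($v\in\mathbb{R}^d$) is L. *)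

From HB Require Import structures.
From mathcomp Require Import all_boot all_order all_algebra.
From mathcomp Require Import all_classical all_reals.
Set Implicit Arguments. Unset Strict Implicit. Unset Printing Implicit Defensive.
Import Order.TTheory GRing.Theory Num.Theory.
Local Open Scope ring_scope.
Local Open Scope classical_set_scope.

Section Defs.
Variable R : realType.

Definition is_integer (x : R) : Prop := exists z : int, x = z%:~R.

Definition inSLR k (g : 'M[R]_k) : Prop := \det g = 1.

Definition inSLZ k (gam : 'M[R]_k) : Prop :=
  (forall i j, is_integer (gam i j)) /\ \det gam = 1.

Definition inA k (D : 'M[R]_k) : Prop :=
  is_diag_mx D /\ (forall i, 0 < D i i) /\ \det D = 1.

Definition intvec k (u : 'cV[R]_k) : Prop := forall i, is_integer (u i 0).

Definition lattice k (g : 'M[R]_k) : set 'cV[R]_k :=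
  [set g *m u | u in intvec (k:=k)].

Definition grid k (g : 'M[R]_k) (v : 'cV[R]_k) : set 'cV[R]_k :=
  [set w + v | w in lattice g].

Definition Nw k (w : 'cV[R]_k) : R := \prod_(i < k) w i 0.

Definition Ngrid k (g : 'M[R]_k) (v : 'cV[R]_k) : R :=
  inf [set `|Nw w| | w in grid g v].

(* n(x+v) = x + n v ; the grid x+v is L iff inf_{n <> 0} |n N(n y)| = 0 *)
Definition isL k (g : 'M[R]_k) (v : 'cV[R]_k) : Prop :=
  inf [set `|n%:~R * Ngrid g (n%:~R *: v)| | n in [set n : int | n != 0]] = 0.

Definition isGL k (g : 'M[R]_k) : Prop := forall v : 'cV[R]_k, isL g v.

Definition tau d (g : 'M[R]_d) (v : 'cV[R]_d) : 'M[R]_(d + 1) :=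
  block_mx g v 0 1.

(* The lattice g0 SL_k(Z) lies in the closure (quotient topology on
   SL_k(R)/SL_k(Z), SL_k(R) with the topology induced from matrix entries)
   of the orbit A_k (g SL_k(Z)).  Since the quotient map is open, this means:
   every neighbourhood of g0 in SL_k(R) meets A_k g SL_k(Z). *)
Definition in_orbit_closure k (g0 g : 'M[R]_k) : Prop :=
  forall eps : R, 0 < eps ->
    exists D gam, inA D /\ inSLZ gam /\
      forall i j, `|(D *m g *m gam) i j - g0 i j| < eps.

End Defs.

From HB Require Import structures.
From mathcomp Require Import all_boot all_order all_algebra.
From mathcomp Require Import all_classical all_reals all_analysis.
From mathcomp Require Import lra.
Import Order.TTheory GRing.Theory Num.Theory numFieldNormedType.Exports.
Local Open Scope ring_scope.
Local Open Scope classical_set_scope.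
Set Implicit Arguments.
Unset Strict Implicit.

(* A grid y = g + v is L iff the lattice tau_y contains vectors with nonzero last
   coordinate and arbitrarily small coordinate product Nw.  If D tau_y gam is close
   to tau_y0, the vector of D tau_y gam with the same integral coordinates as a
   good vector of tau_y0 is close to it, so its last coordinate is still nonzero
   (it is near a nonzero integer) and its product is still small; Nw is invariant
   under A_(d+1), which gives (1).  For (2), approximate x0 by D_n x gam_n; an
   element of SL_(d+1)(Z) acting as an integral translation moves the grid vector
   into the unit cube, a subsequence converges by compactness, so tau of some grid
   x0 + v0 lies in the closure of A_(d+1) tau_(x + v), and (1) applies. *)

Section Lattices.
Variable R : realType.
Implicit Types (d k : nat).

Lemma mxBE m n (A B : 'M[R]_(m, n)) i j : (A - B) i j = A i j - B i j.
Proof. by rewrite !mxE. Qed.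

Lemma normr_mulmx_entry_le m k (A : 'M[R]_(m, k)) (z : 'cV[R]_k) i :
  `|(A *m z) i 0| <= \sum_j `|A i j| * `|z j 0|.
Proof.
rewrite mxE; apply: le_trans (ler_norm_sum _ _ _) _.
by apply: ler_sum => j _; rewrite normrM.
Qed.

Lemma normr_mulmxB_entry_le m k (A B : 'M[R]_(m, k)) (x y : 'cV[R]_k) (dl r : R) i :
  (forall j, `|A i j - B i j| <= dl) -> (forall j, `|x j 0| <= 1) ->
  (forall j, `|x j 0 - y j 0| <= r) ->
  `|(A *m x - B *m y) i 0| <= dl *+ k + r * \sum_j `|B i j|.
Proof.
move=> AB x_le1 xy.
have -> : A *m x - B *m y = (A - B) *m x + B *m (x - y).
  by rewrite mulmxBl mulmxBr addrA subrK.
rewrite mxE; apply: le_trans (ler_normD _ _) (lerD _ _).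
  apply: le_trans (normr_mulmx_entry_le _ _ _) _.
  rewrite -[k in dl *+ k]card_ord -sumr_const; apply: ler_sum => j _.
  by rewrite -[dl]mulr1 ler_pM // mxBE.
apply: le_trans (normr_mulmx_entry_le _ _ _) _; rewrite mulr_sumr.
by apply: ler_sum => j _; rewrite [r * _]mulrC ler_wpM2l // mxBE.
Qed.

Lemma mulmx_diag_entry k (D : 'M[R]_k) (x : 'cV[R]_k) i :
  is_diag_mx D -> (D *m x) i 0 = D i i * x i 0.
Proof. by case/diag_mxP => dD ->; rewrite mul_diag_mx !mxE eqxx mulr1n. Qed.

Lemma Nw_continuous k : continuous (fun y : 'cV[R]_k => Nw y).
Proof.
rewrite /Nw; elim: (index_enum _) => [|a s IH] x.
  rewrite (_ : (fun _ => _) = fun=> 1); first exact: cst_continuous.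
  by apply/funext => y; rewrite big_nil.
rewrite (_ : (fun _ => _) = (fun y : 'cV[R]_k => y a 0) \* (fun y => \prod_(i <- s) y i 0)).
  exact: continuousM (@coord_continuous _ _ _ _ _ x) (IH x).
by apply/funext => y; rewrite big_cons.
Qed.

Lemma Nw_near k (x : 'cV[R]_k) (e : R) : 0 < e -> exists2 eta : R, 0 < eta &
  forall y : 'cV[R]_k, (forall i, `|y i 0 - x i 0| < eta) -> `|Nw y - Nw x| < e.
Proof.
move=> e0; have near_x := @cvgr_dist_lt _ _ _ (nbhs x) _ _ _ (@Nw_continuous k x) _ e0.
have [eta eta0 Heta] := iffLR (nbhs_ballP _ _) (near_x _).
exists eta => // y y_near; rewrite distrC; apply: Heta.
by split=> // i j; rewrite ord1 /ball /= distrC; apply: y_near.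
Qed.

Lemma Nw_inA_mulmx k (D : 'M[R]_k) (x : 'cV[R]_k) : inA D -> Nw (D *m x) = Nw x.
Proof.
case=> Ddiag [_ detD]; rewrite /Nw.
under eq_bigr => i _ do rewrite mulmx_diag_entry //.
rewrite big_split /=; move: detD Ddiag => + /diag_mxP[dD DdD].
rewrite DdD det_diag => detD.
by rewrite (eq_bigr (fun i => dD 0 i)) ?detD ?mul1r // => i _; rewrite mxE eqxx.
Qed.

Lemma Nw_col_mx k (a : 'cV[R]_k) (b : 'cV[R]_1) : Nw (col_mx a b) = Nw a * b 0 0.
Proof.
rewrite /Nw big_split_ord big_ord1 /=.
by congr (_ * _); [apply: eq_bigr => i _; rewrite col_mxEu | rewrite col_mxEd].
Qed.

Lemma cube_seq_cluster k (t : nat -> 'cV[R]_k) : (forall n i, 0 <= t n i 0 <= 1) ->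
  exists ts : 'cV[R]_k, forall (r : R) (P : set nat), 0 < r -> (\forall n \near \oo, P n) ->
    exists2 n, P n & forall i, `|t n i 0 - ts i 0| < r.
Proof.
move=> t01; pose tr n := (t n)^T.
have cube_compact := @rV_compact R k (fun=> `[(0 : R), 1]) (fun=> @segment_compact R 0 1).
have tr_cube : (tr @ \oo) [set w : 'rV[R]_k | forall i, `[0, 1] (w 0 i)].
  by exists 0%N => // n _ i; rewrite /= mxE in_itv /= t01.
have [ts [_ ts_cluster]] := cube_compact _ _ tr_cube.
exists ts^T => r P r0 P_near.
have tr_P : (tr @ \oo) (tr @` P) by apply: filterS P_near => n Pn; exists n.
have [_ [[n Pn <-] [_ /(_ 0) tr_ts]]] := ts_cluster _ _ tr_P (nbhsx_ballx ts r r0).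
by exists n => // i; move/(_ i): tr_ts; rewrite /ball /= !mxE distrC.
Qed.

Lemma is_integerP (x : R) : is_integer x <-> x \is a Num.int.
Proof. by split=> /intrP. Qed.

Lemma intvec_mulmx k l (A : 'M[R]_(k, l)) u :
  (forall i j, is_integer (A i j)) -> intvec u -> intvec (A *m u).
Proof.
move=> AZ uZ i; apply/is_integerP; rewrite mxE.
by apply: rpred_sum => j _; apply: rpredM; apply/is_integerP.
Qed.

Lemma intvec_col_mx k l (u : 'cV[R]_k) (w : 'cV[R]_l) :
  intvec u -> intvec w -> intvec (col_mx u w).
Proof. by move=> uZ wZ i; rewrite mxE; case: splitP => j _; [apply: uZ | apply: wZ]. Qed.

Lemma inf_nonneg_eq0P (S : set R) : S !=set0 -> (forall x, S x -> 0 <= x) ->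
  inf S = 0 <-> forall e, 0 < e -> exists2 x, S x & x < e.
Proof.
move=> S0 S_ge0; have Slb : has_lbound S by exists 0.
split=> [infS0 e e0|small].
  by apply: inf_lt => //; rewrite infS0.
apply/eqP; rewrite eq_le lb_le_inf // andbT leNgt; apply/negP => infS_gt0.
have [x Sx] := small _ infS_gt0.
by rewrite ltNge ge_inf.
Qed.

Lemma grid_mem k (g : 'M[R]_k) v u : intvec u -> grid g v (g *m u + v).
Proof. by move=> uZ; exists (g *m u) => //; exists u. Qed.

Lemma Ngrid_ltP k (g : 'M[R]_k) v c :
  Ngrid g v < c <-> exists2 u, intvec u & `|Nw (g *m u + v)| < c.
Proof.
have v_grid : grid g v (g *m 0 + v).
  by apply: grid_mem => i; apply/is_integerP; rewrite mxE rpred0.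
split=> [|[u uZ lt_c]].
  case/inf_lt; first by exists `|Nw (g *m 0 + v)|, (g *m 0 + v).
  by move=> _ [_ [_ [u uZ <-] <-] <-] lt_c; exists u.
apply: le_lt_trans lt_c; apply: ge_inf; first by exists 0 => _ [w _ <-].
by exists (g *m u + v) => //; apply: grid_mem.
Qed.

Lemma Ngrid_ge0 k (g : 'M[R]_k) v : 0 <= Ngrid g v.
Proof. by rewrite leNgt; apply/negP => /Ngrid_ltP[u _]; rewrite ltNge normr_ge0. Qed.

Lemma isLP k (g : 'M[R]_k) v : isL g v <-> forall e, 0 < e ->
  exists2 n : int, n != 0 & exists2 u, intvec u & `|n%:~R * Nw (g *m u + n%:~R *: v)| < e.
Proof.
rewrite /isL inf_nonneg_eq0P; last by move=> _ [n _ <-].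
- have n_gt0 (n : int) : n != 0 -> (0 : R) < `|n%:~R| by rewrite normr_gt0 intr_eq0.
  split=> small e e0.
    have [_ [n n0 <-]] := small e e0.
    rewrite normrM (ger0_norm (Ngrid_ge0 _ _)) -ltr_pdivlMl ?n_gt0 //.
    case/Ngrid_ltP => u uZ lt_e; exists n => //; exists u => //.
    by rewrite normrM -ltr_pdivlMl ?n_gt0.
  have [n n0 [u uZ lt_e]] := small e e0.
  exists `|n%:~R * Ngrid g (n%:~R *: v)|; first by exists n.
  rewrite normrM (ger0_norm (Ngrid_ge0 _ _)) -ltr_pdivlMl ?n_gt0 //.
  by apply/Ngrid_ltP; exists u; rewrite // ltr_pdivlMl ?n_gt0 // -normrM.
- by exists `|1%:~R * Ngrid g (1%:~R *: v)|, 1.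
Qed.

Lemma tau_mulmx d (g : 'M[R]_d) v z :
  tau g v *m z = col_mx (g *m usubmx z + dsubmx z 0 0 *: v) (dsubmx z).
Proof.
rewrite /tau -{1}[z]vsubmxK mul_block_col mul0mx mul1mx add0r.
by rewrite {1}[dsubmx z]mx11_scalar mul_mx_scalar.
Qed.

Lemma tau_mulmx_last d (g : 'M[R]_d) v (z : 'cV[R]_(d + 1)) :
  (tau g v *m z) (rshift d 0) 0 = dsubmx z 0 0.
Proof. by rewrite tau_mulmx col_mxEd. Qed.

Lemma Nw_tau_mulmx d (g : 'M[R]_d) v z :
  Nw (tau g v *m z) = Nw (g *m usubmx z + dsubmx z 0 0 *: v) * dsubmx z 0 0.
Proof. by rewrite tau_mulmx Nw_col_mx. Qed.

Lemma isL_tauP d (g : 'M[R]_d) v : isL g v <-> forall e, 0 < e ->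
  exists z, [/\ intvec z, dsubmx z 0 0 != 0 & `|Nw (tau g v *m z)| < e].
Proof.
rewrite isLP; split=> small e /small.
  case=> n n0 [u uZ lt_e]; exists (col_mx u n%:~R%:M).
  rewrite Nw_tau_mulmx col_mxKu col_mxKd mxE eqxx mulr1n intr_eq0 mulrC.
  split=> //; apply: intvec_col_mx => // i; rewrite mxE.
  by apply/is_integerP; rewrite rpredMn ?intr_int.
case=> z [zZ z0 lt_e].
have /is_integerP/intrP[n zn] : is_integer (dsubmx z 0 0) by rewrite mxE; apply: zZ.
exists n; first by rewrite -(intr_eq0 R) -zn.
exists (usubmx z); first by move=> i; rewrite mxE; apply: zZ.
by rewrite -zn mulrC -Nw_tau_mulmx.
Qed.

Lemma isL_of_tau_orbit_closure d (g g0 : 'M[R]_d) v v0 :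
  in_orbit_closure (tau g0 v0) (tau g v) -> isL g0 v0 -> isL g v.
Proof.
move=> near_g0 /isL_tauP small0; apply/isL_tauP => e e0.
have e20 : 0 < e / 2 by rewrite divr_gt0.
have [z0 [z0Z z00 lt_e]] := small0 _ e20.
set X := tau g0 v0 *m z0.
have [eta eta0 near_X] := Nw_near X e20.
pose eta1 := Num.min eta 1; pose S := \sum_j `|z0 j 0|.
have eta10 : 0 < eta1 by rewrite lt_min eta0 ltr01.
have S1_gt0 : 0 < 1 + S by rewrite ltr_pwDl ?sumr_ge0.
have [D [gam [DA [[gamZ _] close]]]] := near_g0 _ (divr_gt0 eta10 S1_gt0).
pose z := gam *m z0; pose Y := D *m (tau g v *m z).
have YX i : `|Y i 0 - X i 0| < eta1.
  have -> : Y i 0 - X i 0 = ((D *m tau g v *m gam - tau g0 v0) *m z0) i 0.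
    by rewrite mulmxBl mxBE /Y /z !mulmxA.
  apply: le_lt_trans (normr_mulmx_entry_le _ _ _) _.
  apply: (@le_lt_trans _ _ (eta1 / (1 + S) * S)).
    by rewrite mulr_sumr; apply: ler_sum => j _; rewrite ler_wpM2r // mxBE ltW.
  by rewrite mulrAC ltr_pdivrMr // ltr_pM2l // ltrDr.
have zlast : dsubmx z 0 0 != 0.
  apply: contraTneq (YX (rshift d 0)) => z0last.
  rewrite /Y mulmx_diag_entry ?DA.1 // !tau_mulmx_last z0last mulr0 sub0r normrN.
  have z0last_ge1 : 1 <= `|dsubmx z0 0 0|.
    by apply: norm_intr_ge1 z00; apply/is_integerP; rewrite mxE; apply: z0Z.
  by rewrite -leNgt (le_trans _ z0last_ge1) // ge_min lexx orbT.
exists z; split=> //; first exact: intvec_mulmx gamZ z0Z.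
rewrite -(Nw_inA_mulmx _ DA) -/Y -[Nw Y](subrK (Nw X)).
rewrite [e]splitr; apply: le_lt_trans (ler_normD _ _) (ltrD _ lt_e).
by apply: near_X => i; apply: lt_le_trans (YX i) _; rewrite ge_min lexx.
Qed.

Lemma inA_block k (D : 'M[R]_k) : inA D -> inA (block_mx D 0 0 (1 : 'M[R]_1)).
Proof.
case=> Ddiag [Dpos detD]; split; [|split].
- by rewrite is_diag_block_mx // !eqxx Ddiag scalar_mx_is_diag.
- move=> i; case: (split_ordP i) => j ->; first by rewrite block_mxEul.
  by rewrite block_mxEdr mxE eqxx ltr01.
- by rewrite det_ublock detD det1 mulr1.
Qed.

Lemma inSLZ_block k (gam : 'M[R]_k) c :
  inSLZ gam -> intvec c -> inSLZ (block_mx gam c 0 (1 : 'M[R]_1)).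
Proof.
case=> gamZ detgam cZ; split; last by rewrite det_ublock detgam det1 mulr1.
move=> i j; case: (split_ordP i) => {}i ->; case: (split_ordP j) => {}j ->.
- by rewrite block_mxEul.
- by rewrite block_mxEur ord1.
- by rewrite block_mxEdl mxE; exists 0.
- by rewrite block_mxEdr !ord1 mxE; exists 1.
Qed.

Lemma block_tau_mulmx d (D g gam : 'M[R]_d) v c :
  block_mx D 0 0 1 *m tau g v *m block_mx gam c 0 1 =
  tau (D *m g *m gam) (D *m (g *m c + v)).
Proof.
rewrite /tau !mulmx_block !(mulmx0, mul0mx, mulmx1, mul1mx, addr0, add0r).
by rewrite mulmxDr !mulmxA.
Qed.

Lemma tau_entries_close d (A B : 'M[R]_d) (a b : 'cV[R]_d) (e : R) : 0 < e ->
  (forall i j, `|A i j - B i j| < e) -> (forall i, `|a i 0 - b i 0| < e) ->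
  forall i j, `|tau A a i j - tau B b i j| < e.
Proof.
move=> e0 AB ab i j; rewrite /tau.
case: (split_ordP i) => {}i ->; case: (split_ordP j) => {}j ->.
- by rewrite !block_mxEul.
- by rewrite !block_mxEur ord1.
- by rewrite !block_mxEdl subrr normr0.
- by rewrite !block_mxEdr subrr normr0.
Qed.

Lemma orbit_closure_seq k (g0 g : 'M[R]_k) : in_orbit_closure g0 g ->
  exists D gam : nat -> 'M[R]_k, forall n, [/\ inA (D n), inSLZ (gam n) &
    forall i j, `|(D n *m g *m gam n) i j - g0 i j| < n.+1%:R^-1].
Proof.
move=> near_g0; have inv_gt0 n : 0 < n.+1%:R^-1 :> R by rewrite invr_gt0.
have [D D_spec] := choice (fun n => near_g0 _ (inv_gt0 n)).
have [gam gam_spec] := choice D_spec.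
by exists D, gam => n; have [? []] := gam_spec n.
Qed.

Lemma tau_orbit_fract d (D g gam : 'M[R]_d) v : inSLR g -> inA D -> inSLZ gam ->
  exists w : 'cV[R]_d, (forall i, 0 <= w i 0 <= 1) /\ exists D' gam',
    [/\ inA D', inSLZ gam' & D' *m tau g v *m gam' = tau (D *m g *m gam) (D *m g *m gam *m w)].
Proof.
move=> detg DA gamZ; set M := D *m g *m gam.
have M_unit : M \in unitmx.
  by rewrite unitmxE !det_mulmx DA.2.2 detg gamZ.2 !mulr1 unitr1.
pose t := invmx M *m (D *m v); pose fl : 'cV[R]_d := \col_i (Num.floor (t i 0))%:~R.
exists (t - fl); split.
  move=> i; have /andP[fl_le] := floor_itv (t i 0); rewrite intrD => lt_fl1.
  by rewrite mxBE [fl i 0]mxE subr_ge0 fl_le lerBlDl (ltW lt_fl1).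
exists (block_mx D 0 0 1), (block_mx gam (- (gam *m fl)) 0 1); split.
- exact: inA_block.
- apply: inSLZ_block => // i; apply/is_integerP; rewrite mxE rpredN; apply/is_integerP.
  by apply: intvec_mulmx gamZ.1 _ i => j; rewrite mxE; exists (Num.floor (t j 0)).
- by rewrite block_tau_mulmx mulmxBr mulKVmx // mulmxDr !mulmxN !mulmxA addrC.
Qed.

Lemma tau_translate_near d (g0 : 'M[R]_d) (e : R) : 0 < e ->
  exists2 dl : R, 0 < dl & exists2 r : R, 0 < r & forall (M : 'M[R]_d) (w ts : 'cV[R]_d),
    (forall i j, `|M i j - g0 i j| < dl) -> (forall i, 0 <= w i 0 <= 1) ->
    (forall i, `|w i 0 - ts i 0| < r) ->
    forall i j, `|tau M (M *m w) i j - tau g0 (g0 *m ts) i j| < e.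
Proof.
move=> e0; pose C := \sum_i \sum_j `|g0 i j|.
have C_ge0 : 0 <= C by do 2![apply: sumr_ge0 => ? _].
pose dl := e / 2 / d.+1%:R; pose r := e / 2 / (C + 1).
have dl0 : 0 < dl by rewrite !divr_gt0.
have r0 : 0 < r by rewrite !divr_gt0 // ltr_pwDr.
have dl_d : dl + dl *+ d = e / 2 by rewrite -mulrS /dl -[_ *+ d.+1]mulr_natr divfK ?pnatr_eq0.
have dl_d_ge0 : 0 <= dl *+ d by rewrite mulrn_wge0 ?ltW.
have r_C : r * C + r = e / 2.
  by rewrite -[X in _ + X]mulr1 -mulrDr /r divfK // lt0r_neq0 // ltr_pwDr.
exists dl => //; exists r => // M w ts M_g0 w01 w_ts.
apply: tau_entries_close => // [i j | i]; first by apply: lt_trans (M_g0 i j) _; lra.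
rewrite -mxBE; apply: le_lt_trans (normr_mulmxB_entry_le (dl := dl) (r := r) _ _ _) _.
- by move=> j; apply/ltW.
- by move=> j; have /andP[w_ge0 w_le1] := w01 j; rewrite ger0_norm.
- by move=> j; apply/ltW.
have row_le_C : \sum_j `|g0 i j| <= C.
  by rewrite /C [leRHS](bigD1 i) //= lerDl; do 2![apply: sumr_ge0 => ? _].
have : r * \sum_j `|g0 i j| <= r * C by rewrite ler_pM2l.
lra.
Qed.

Lemma tau_orbit_closure d (g g0 : 'M[R]_d) v : inSLR g -> in_orbit_closure g0 g ->
  exists v0, in_orbit_closure (tau g0 v0) (tau g v).
Proof.
move=> detg /orbit_closure_seq[D [gam Dgam_spec]].
have [w w_spec] := choice (fun n =>
  let: And3 DA gamZ _ := Dgam_spec n in tau_orbit_fract v detg DA gamZ).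
have [ts ts_cluster] := cube_seq_cluster (fun n => (w_spec n).1).
exists (g0 *m ts) => e e0.
have [dl dl0 [r r0 tau_near]] := tau_translate_near g0 e0.
have [n n_large w_ts] := ts_cluster r _ r0 (near_infty_natSinv_lt (PosNum dl0)).
have [w01 [D' [gam' [D'A gam'Z tau_eq]]]] := w_spec n; have [_ _ M_g0] := Dgam_spec n.
exists D', gam'; rewrite tau_eq; do 2!split=> //; apply: tau_near w01 w_ts => i j.
exact: lt_trans (M_g0 i j) n_large.
Qed.

Lemma isGL_of_orbit_closure d (g g0 : 'M[R]_d) :
  inSLR g -> in_orbit_closure g0 g -> isGL g0 -> isGL g.
Proof.
move=> detg near_g0 GLg0 v; have [v0 near_v0] := tau_orbit_closure v detg near_g0.
exact: isL_of_tau_orbit_closure near_v0 (GLg0 v0).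
Qed.

End Lattices.

Theorem proposition2p1 (R : realType) (d : nat) (hd : (2 <= d)%N) :
  (forall (g g0 : 'M[R]_d) (v v0 : 'cV[R]_d),
      inSLR g -> inSLR g0 ->
      in_orbit_closure (tau g0 v0) (tau g v) ->
      isL g0 v0 -> isL g v)
  /\
  (forall (g g0 : 'M[R]_d),
      inSLR g -> inSLR g0 ->
      in_orbit_closure g0 g ->
      isGL g0 -> isGL g).
Proof.
split=> [g g0 v v0 _ _ | g g0 detg _]; first exact: isL_of_tau_orbit_closure.
exact: isGL_of_orbit_closure.
Qed.
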